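(* For every $n\ge1$, the parity function $\Pi:\{0,1\}^n\to\{0,1\}$ ($\Pi(x)=1$ iff $\sum_{j=1}^n x_j$ is odd) has a $y$-linear quadratization involving $\lfloor n/2\rfloor$ auxiliary variables, and its complement $\overline{\Pi}=1-\Pi$ has a $y$-linear quadratization involving $\lfloor (n-1)/2\rfloor$ auxiliary variables.
   Context: A quadratization of $f:\{0,1\}^n\to\mathbb{R}$ using $m$ auxiliary variables is a polynomial $g(x,y)$ of degree at most $2$ in $x_1,\ldots,x_n,y_1,\ldots,y_m$ such that $f(x)=\min\{g(x,y):y\in\{0,1\}^m\}$ for all $x\in\{0,1\}^n$. It is $y$-linear if it contains no product of two auxiliary variables, i.e. $g(x,y)=q(x)+\sum_{i=1}^m a_i(x)y_i$ with $q$ quadratic and each $a_i$ affine in $x$. *)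

From HB Require Import structures.
From mathcomp Require Import all_boot all_order all_algebra.
Set Implicit Arguments. Unset Strict Implicit. Unset Printing Implicit Defensive.
Import Order.TTheory GRing.Theory Num.Theory.
Local Open Scope ring_scope.

Section Quad.
Variable R : realFieldType.

Definition bitR (b : bool) : R := (b : nat)%:R.

Definition quad_eval (n : nat) (c : R) (l : 'I_n -> R) (Q : 'I_n -> 'I_n -> R)
  (x : 'I_n -> bool) : R :=
  c + \sum_(j < n) l j * bitR (x j)
    + \sum_(j < n) \sum_(k < n) Q j k * bitR (x j) * bitR (x k).

Definition aff_eval (n : nat) (b : R) (A : 'I_n -> R) (x : 'I_n -> bool) : R :=
  b + \sum_(j < n) A j * bitR (x j).

Definition ylin_eval (n m : nat) (c : R) (l : 'I_n -> R) (Q : 'I_n -> 'I_n -> R)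
  (b : 'I_m -> R) (A : 'I_m -> 'I_n -> R) (x : 'I_n -> bool) (y : 'I_m -> bool) : R :=
  quad_eval c l Q x + \sum_(i < m) aff_eval (b i) (A i) x * bitR (y i).

Definition has_ylin_quadratization (n m : nat) (f : ('I_n -> bool) -> R) : Prop :=
  exists (c : R) (l : 'I_n -> R) (Q : 'I_n -> 'I_n -> R)
         (b : 'I_m -> R) (A : 'I_m -> 'I_n -> R),
    forall x : 'I_n -> bool,
      (forall y : 'I_m -> bool, f x <= ylin_eval c l Q b A x y) /\
      (exists y : 'I_m -> bool, ylin_eval c l Q b A x y = f x).

Definition parity (n : nat) (x : 'I_n -> bool) : R :=
  bitR (odd (\sum_(j < n) (x j : nat))%N).

End Quad.

(** With [s] the Hamming weight of [x], minimising [s^2 + sum_i (4 t_i - 4 s) y_i]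
    over [y] gives [s^2 - 4 sum_i (s - t_i)] (truncated subtraction), and for the
    thresholds [t_i = 2i+1], [i < m], this equals [odd s] as soon as [s <= 2m+1]:
    the square [s^2] is [odd s] plus four times the sum of the positive numbers
    [s - 1, s - 3, ...].  The complement is handled by the same identity applied to
    [s - 1], with [(s - 1)^2 = 1 - 2s + s^2] supplying the quadratic part and the
    thresholds shifted to [t_i = 2i+2]. *)
From HB Require Import structures.
From mathcomp Require Import all_boot all_order all_algebra.
From mathcomp Require Import zify ring.
Import Order.TTheory GRing.Theory Num.Theory.
Local Open Scope ring_scope.

Lemma sum_subn_odd_addn_sqr_min (m s : nat) :
  (\sum_(i < m) (s - (2 * i + 1)) + minn m s./2 ^ 2 = minn m s./2 * s)%N.
Proof.
elim: m => [|m IHm]; first by rewrite big_ord0 min0n.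
rewrite big_ord_recr /=.
have [lt_m_half | le_half_m] := ltnP m s./2.
  have -> : minn m.+1 s./2 = m.+1 by lia.
  have min_m : minn m s./2 = m by lia.
  rewrite min_m in IHm; move: IHm; rewrite !expnS !expn0 !muln1.
  move: (\sum_(i < m) _)%N => S; nia.
have -> : minn m.+1 s./2 = minn m s./2 by lia.
have -> : (s - (2 * m + 1) = 0)%N by lia.
by rewrite addn0.
Qed.

Lemma sqr_odd_add_sum_subn (m s : nat) : (s <= 2 * m + 1)%N ->
  (s ^ 2 = odd s + 4 * \sum_(i < m) (s - (2 * i + 1)))%N.
Proof.
move=> le_s; have := sum_subn_odd_addn_sqr_min m s.
have -> : minn m s./2 = s./2 by lia.
have := odd_double_half s; move: s./2 (odd s) => h [] /= <-; nia.
Qed.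

Definition weight {n : nat} (x : 'I_n -> bool) : nat := \sum_(j < n) (x j : nat).

Lemma weight_le {n : nat} (x : 'I_n -> bool) : (weight x <= n)%N.
Proof.
rewrite /weight -[X in (_ <= X)%N]card_ord -sum1_card.
by apply: leq_sum => j _; case: (x j).
Qed.

Section Quadratization.
Variable R : realFieldType.

Lemma ylin_quadratization_of_min (n m : nat) (f : ('I_n -> bool) -> R)
    (c : R) (l : 'I_n -> R) (Q : 'I_n -> 'I_n -> R)
    (b : 'I_m -> R) (A : 'I_m -> 'I_n -> R) :
  (forall x, quad_eval c l Q x + \sum_(i < m) Num.min (aff_eval (b i) (A i) x) 0 = f x) ->
  has_ylin_quadratization m f.
Proof.
move=> minE; exists c, l, Q, b, A => x; rewrite -minE; split.
  move=> y; rewrite /ylin_eval lerD2l; apply: ler_sum => i _.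
  by rewrite /bitR; case: (y i); rewrite /= ?mulr1 ?mulr0 ge_min lexx ?orbT.
exists (fun i => aff_eval (b i) (A i) x < 0); rewrite /ylin_eval; congr (_ + _).
apply: eq_bigr => i _; rewrite /bitR.
by case: ltP; rewrite /= ?mulr1 ?mulr0.
Qed.

Lemma sum_bitR (n : nat) (x : 'I_n -> bool) :
  \sum_(j < n) bitR R (x j) = (weight x)%:R.
Proof. by rewrite /weight natr_sum. Qed.

Lemma quad_eval_complete (n : nat) (c l0 : R) (x : 'I_n -> bool) :
  quad_eval c (fun _ => l0) (fun _ _ => 1) x = c + l0 * (weight x)%:R + (weight x)%:R ^+ 2.
Proof.
rewrite /quad_eval -sum_bitR mulr_sumr expr2 mulr_suml; congr (_ + _).
apply: eq_bigr => j _; rewrite mulr_sumr; apply: eq_bigr => k _.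
by rewrite mul1r.
Qed.

Lemma aff_eval_const (n : nat) (t : nat) (x : 'I_n -> bool) :
  aff_eval (4 * t)%:R (fun _ => -4) x = (4 * t)%:R - (4 * weight x)%:R :> R.
Proof.
rewrite /aff_eval !natrM -sum_bitR mulr_sumr -sumrN; congr (_ + _).
by apply: eq_bigr => j _; rewrite mulNr.
Qed.

Lemma min_natrB0 (a b : nat) : Num.min (a%:R - b%:R) 0 = - (b - a)%:R :> R.
Proof.
have [le_ab | lt_ba] := leqP a b.
  by rewrite min_l ?natrB ?opprB // subr_le0 ler_nat.
by rewrite min_r ?subr_ge0 ?ler_nat 1?ltnW // (eqP (ltnW lt_ba)) oppr0.
Qed.

Lemma threshold_minE (n m : nat) (c l0 : R) (t : 'I_m -> nat) (x : 'I_n -> bool) :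
  quad_eval c (fun _ => l0) (fun _ _ => 1) x
    + \sum_(i < m) Num.min (aff_eval (4 * t i)%:R (fun _ => -4) x) 0
  = c + l0 * (weight x)%:R + (weight x)%:R ^+ 2
    - (4 * \sum_(i < m) (weight x - t i))%:R.
Proof.
rewrite quad_eval_complete; congr (_ + _).
under eq_bigr => i _ do rewrite aff_eval_const min_natrB0 -mulnBr.
by rewrite sumrN -natr_sum -big_distrr.
Qed.

Lemma threshold_quadratization (n m : nat) (f : ('I_n -> bool) -> R)
    (c l0 : R) (t : 'I_m -> nat) :
  (forall x, c + l0 * (weight x)%:R + (weight x)%:R ^+ 2
               - (4 * \sum_(i < m) (weight x - t i))%:R = f x) ->
  has_ylin_quadratization m f.
Proof.
move=> minE; apply: (@ylin_quadratization_of_min _ _ _ c (fun _ => l0) (fun _ _ => 1)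
  (fun i => (4 * t i)%:R) (fun _ _ => -4)) => x.
by rewrite threshold_minE.
Qed.

Lemma parity_minE (s m : nat) : (s <= 2 * m + 1)%N ->
  s%:R ^+ 2 - (4 * \sum_(i < m) (s - (2 * i + 1)))%:R = bitR R (odd s).
Proof.
move=> le_s; rewrite -natrX (sqr_odd_add_sum_subn _ _ le_s) natrD.
by rewrite /bitR addrK.
Qed.

Lemma coparity_minE (s m : nat) : (s <= 2 * m + 2)%N ->
  1 + -2 * s%:R + s%:R ^+ 2 - (4 * \sum_(i < m) (s - (2 * i + 2)))%:R
  = 1 - bitR R (odd s).
Proof.
case: s => [|s] le_s.
  by rewrite big1 ?muln0 /bitR /=; [ring | move=> i _; rewrite sub0n].
under eq_bigr => i _ do rewrite addnS subSS.
have /parity_minE : (s <= 2 * m + 1)%N by lia.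
set X := (4 * _)%:R => /(canRL (subKr _)) ->.
by rewrite -addn1 natrD /bitR /=; case: (odd s) => /=; ring.
Qed.

End Quadratization.

Theorem theorem6 (R : realFieldType) (n : nat) (hn : (1 <= n)%N) :
  has_ylin_quadratization n./2 (@parity R n) /\
  has_ylin_quadratization (n - 1)./2 (fun x => 1 - @parity R n x).
Proof.
split.
- apply: (@threshold_quadratization R _ _ _ 0 0 (fun i => 2 * i + 1)%N) => x.
  rewrite mul0r !add0r parity_minE //.
  by apply: leq_trans (weight_le x) _; lia.
- apply: (@threshold_quadratization R _ _ _ 1 (-2) (fun i => 2 * i + 2)%N) => x.
  rewrite coparity_minE //.
  by apply: leq_trans (weight_le x) _; lia.
Qed.
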